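(* Let $\mathcal P$ be a set of pre-tangles in a graph $G$, let $N$ be a nested set of separations of $G$ which efficiently distinguishes $\mathcal P$, and let $(\vec s_i)_{i\in\mathbb N}$ be a strictly increasing sequence of orientations of separations in $N$. If $(\vec s_i)_i$ is strongly $\mathcal P$-relevant, then there is a sequence $(P_i)_{i\in\mathbb N}$ in $\mathcal P$ such that for all $i\in\mathbb N$: $\overleftarrow{s}_i\in P_i$, $\vec s_i\in P_{i+1}$, and $s_i$ efficiently distinguishes $P_i$ and $P_{i+1}$.
   Context: Notation: $s$ denotes a separation (an unordered pair $\{A,B\}$ of subsets of $V(G)$ with $A\cup B=V(G)$ and no edge between $A\setminus B$ and $B\setminus A$; order $|s|=|A\cap B|$), $\vec s,\overleftarrow{s}$ its two orientations; oriented separations are ordered by $(A,B)\le(C,D)$ iff $A\subseteq C$ and $B\supseteq D$. Nested: some orientations comparable. A set $O$ of oriented separations is consistent if there are no $(A,B),(C,D)\in O$ with $\{A,B\}\ne\{C,D\}$ and $(B,A)\le(C,D)$. A pre-tangle is a consistent set $P$ which, for some $k\in\mathbb N\cup\{\aleph_0\}$, contains exactly one orientation of every separation of order $<k$ and nothing else. A separation distinguishes two pre-tangles if both contain an orientation of it but different ones; efficiently if of minimum order among such. $N$ efficiently distinguishes $\mathcal P$ if any two pre-tangles in $\mathcal P$ distinguished by some separation are efficiently distinguished by an element of $N$. A pair $\vec s<\vec t$ is strongly $\mathcal P$-relevant if there are $O,P,Q\in\mathcal P$ such that $s$ efficiently distinguishes $O$ and $P$ with $\vec s\in P$, and $t$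 efficiently distinguishes $P$ and $Q$ with $\overleftarrow{t}\in P$. A strictly increasing sequence $(\vec s_i)$ is strongly $\mathcal P$-relevant if each pair $\vec s_i<\vec s_{i+1}$ is. *)

From Stdlib Require Import List Arith.
Import ListNotations.

Section Seps.
Context {V : Type} (adj : V -> V -> Prop).

(* An oriented separation (A,B); the separation {A,B} is represented by
   either of its orientations. *)
Definition osep : Type := ((V -> Prop) * (V -> Prop))%type.

Definition swap (r : osep) : osep := (snd r, fst r).

Definition is_sep (r : osep) : Prop :=
  (forall v, fst r v \/ snd r v) /\
  (forall u v, fst r u -> ~ snd r u -> snd r v -> ~ fst r v ->
     ~ adj u v /\ ~ adj v u).

Definition has_order (r : osep) (n : nat) : Prop :=
  exists l : list V, length l = n /\ NoDup l /\ (forall x, In x l <-> (fst r x /\ snd r x)).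

(* order < k, for k ∈ ℕ ∪ {ℵ0}, with None standing for ℵ0. *)
Definition order_lt (r : osep) (k : option nat) : Prop :=
  exists n, has_order r n /\
    match k with Some m => n < m | None => True end.

Definition same_sep (r t : osep) : Prop := t = r \/ t = swap r.

Definition ole (r t : osep) : Prop :=
  (forall v, fst r v -> fst t v) /\ (forall v, snd t v -> snd r v).

Definition olt (r t : osep) : Prop := ole r t /\ r <> t.

Definition nested_pair (r t : osep) : Prop :=
  ole r t \/ ole r (swap t) \/ ole (swap r) t \/ ole (swap r) (swap t).

Definition consistent (O : osep -> Prop) : Prop :=
  forall r t, O r -> O t -> ~ same_sep r t -> ~ ole (swap r) t.

Definition pretangle (P : osep -> Prop) : Prop :=
  consistent P /\
  exists k : option nat,
    (forall r, P r -> is_sep r /\ order_lt r k) /\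
    (forall r, is_sep r -> order_lt r k ->
       (P r \/ P (swap r)) /\ (P r -> P (swap r) -> r = swap r)).

Definition distinguishes (r : osep) (P Q : osep -> Prop) : Prop :=
  is_sep r /\ r <> swap r /\
  ((P r /\ Q (swap r)) \/ (P (swap r) /\ Q r)).

Definition eff_distinguishes (r : osep) (P Q : osep -> Prop) : Prop :=
  distinguishes r P Q /\
  exists n, has_order r n /\
    (forall t m, distinguishes t P Q -> has_order t m -> n <= m).

(* N is given as a set of oriented separations; the separation of r lies in
   N iff r or its inverse is in N. *)
Definition sep_in (N : osep -> Prop) (r : osep) : Prop := N r \/ N (swap r).

Definition nested_set (N : osep -> Prop) : Prop :=
  (forall r, N r -> is_sep r) /\
  (forall r t, N r -> N t -> nested_pair r t).

Definition eff_dist_set (N : osep -> Prop) (PP : (osep -> Prop) -> Prop) : Prop :=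
  forall P Q, PP P -> PP Q -> (exists t, distinguishes t P Q) ->
    exists r, sep_in N r /\ eff_distinguishes r P Q.

Definition strongly_relevant_pair (PP : (osep -> Prop) -> Prop) (r t : osep) : Prop :=
  olt r t /\
  exists O P Q, PP O /\ PP P /\ PP Q /\
    eff_distinguishes r O P /\ P r /\
    eff_distinguishes t P Q /\ P (swap t).

Definition strictly_increasing (s : nat -> osep) : Prop :=
  forall i j, i < j -> olt (s i) (s j).

Definition strongly_relevant_seq (PP : (osep -> Prop) -> Prop) (s : nat -> osep) : Prop :=
  strictly_increasing s /\
  forall i, strongly_relevant_pair PP (s i) (s (S i)).

End Seps.

(* Relevance of the pair s_i < s_(i+1) provides pretangles O_i, P_i, Q_i with
   s_i efficiently distinguishing O_i and P_i (s_i in P_i) and s_(i+1)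
   efficiently distinguishing P_i and Q_i (swap s_(i+1) in P_i).  The wanted
   sequence is O_0, P_0, P_1, P_2, ...; the only nontrivial claim is that
   s_(i+1) distinguishes P_i and P_(i+1) EFFICIENTLY.  If not, since N
   efficiently distinguishes the pretangles, some r in N of order < |s_(i+1)|
   distinguishes them.  Every pretangle efficiently separated from P_i or
   P_(i+1) by s_(i+1) must orient r like P_i resp. P_(i+1) (otherwise r would
   be a cheaper distinguisher), so the four pretangles P_i, P_(i+1), Q_i,
   O_(i+1) contain all four combinations of orientations of r and s_(i+1).
   As r and s_(i+1) are nested, one combination is inconsistent. *)
From Stdlib Require Import List Arith Lia ClassicalEpsilon.

Section Separations.
Context {V : Type} (adj : V -> V -> Prop).

Lemma swap_swap (r : @osep V) : swap (swap r) = r.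
Proof. destruct r; reflexivity. Qed.

Lemma is_sep_swap (r : @osep V) : is_sep adj r -> is_sep adj (swap r).
Proof.
  destruct r as [A B]; unfold is_sep, swap; simpl.
  intros [Hcover Hnoedge]; split.
  - intro v; destruct (Hcover v); auto.
  - intros u v Bu nAu Av nBv; destruct (Hnoedge v u Av nBv Bu nAu); auto.
Qed.

Lemma has_order_unique (r : @osep V) n m :
  has_order r n -> has_order r m -> n = m.
Proof.
  intros [l1 [<- [Nd1 H1]]] [l2 [<- [Nd2 H2]]].
  apply Nat.le_antisymm; apply NoDup_incl_length; auto;
    intros x Hx; [apply H2, H1 | apply H1, H2]; exact Hx.
Qed.

Lemma has_order_swap (r : @osep V) n : has_order r n -> has_order (swap r) n.
Proof.
  intros [l [Hl [Nd H]]]; exists l; split; [exact Hl | split; [exact Nd |]].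
  intro x; rewrite H; simpl; tauto.
Qed.

Lemma different_order_not_same_sep (r t : @osep V) n m :
  has_order r n -> has_order t m -> n <> m -> ~ same_sep r t.
Proof.
  intros Hr Ht Hnm [-> | ->]; apply Hnm.
  - exact (has_order_unique _ _ _ Hr Ht).
  - exact (has_order_unique _ _ _ (has_order_swap _ _ Hr) Ht).
Qed.

Lemma nested_pair_swap_l (r t : @osep V) :
  nested_pair r t -> nested_pair (swap r) t.
Proof. destruct r, t; unfold nested_pair, swap; simpl; tauto. Qed.

Lemma nested_pair_swap_r (r t : @osep V) :
  nested_pair r t -> nested_pair r (swap t).
Proof. destruct r, t; unfold nested_pair, swap; simpl; tauto. Qed.

Lemma nested_set_sep_in (N : osep -> Prop) (r t : osep) :
  nested_set adj N -> sep_in N r -> sep_in N t -> nested_pair r t.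
Proof.
  intros [_ Hnest] Hr Ht.
  destruct Hr as [Hr | Hr], Ht as [Ht | Ht]; pose proof (Hnest _ _ Hr Ht) as H.
  - exact H.
  - rewrite <- (swap_swap t); exact (nested_pair_swap_r _ _ H).
  - rewrite <- (swap_swap r); exact (nested_pair_swap_l _ _ H).
  - rewrite <- (swap_swap r), <- (swap_swap t).
    exact (nested_pair_swap_l _ _ (nested_pair_swap_r _ _ H)).
Qed.

Lemma distinguishes_sym (r : @osep V) P Q :
  distinguishes adj r P Q -> distinguishes adj r Q P.
Proof. unfold distinguishes; tauto. Qed.

Lemma eff_distinguishes_sym (r : @osep V) P Q :
  eff_distinguishes adj r P Q -> eff_distinguishes adj r Q P.
Proof.
  intros [Hd [n [Hn Hmin]]]; split; [exact (distinguishes_sym _ _ _ Hd)|].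
  exists n; split; [exact Hn|].
  intros t m Ht; apply Hmin, distinguishes_sym, Ht.
Qed.

Lemma distinguishes_swap (r : @osep V) P Q :
  distinguishes adj r P Q -> distinguishes adj (swap r) P Q.
Proof.
  intros [Hr [Hne Hor]]; split; [exact (is_sep_swap _ Hr)|].
  rewrite swap_swap; split; [intro E; apply Hne; symmetry; exact E | tauto].
Qed.

(* A pretangle contains at most one orientation of a separation it orients
   (unless the separation is degenerate, which a distinguisher is not); so
   if r distinguishes P and Q and P contains r, then Q contains swap r. *)
Lemma distinguishes_other_side (r : @osep V) P Q :
  pretangle adj P -> distinguishes adj r P Q -> P r -> Q (swap r).
Proof.
  intros [_ [k [Hin Hall]]] [_ [Hne [[_ Hq] | [Hp _]]]] Pr; [exact Hq|].
  exfalso; apply Hne.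
  destruct (Hin _ Pr) as [Hs Ho]; exact (proj2 (Hall _ Hs Ho) Pr Hp).
Qed.

Lemma pretangle_orients_lower (P : @osep V -> Prop) s n0 r nr :
  pretangle adj P -> P s -> has_order s n0 ->
  is_sep adj r -> has_order r nr -> nr < n0 -> P r \/ P (swap r).
Proof.
  intros [_ [k [Hin Hall]]] Ps Hs Hr Hnr Hlt.
  apply (Hall _ Hr); exists nr; split; [exact Hnr|].
  destruct (Hin _ Ps) as [_ [n [Hn Hk]]].
  rewrite (has_order_unique _ _ _ Hn Hs) in Hk.
  destruct k; [lia | exact I].
Qed.

(* If s efficiently distinguishes P and Q, then P and Q agree on every
   separation of order below |s|: otherwise it would distinguish them more
   cheaply. *)
Lemma eff_distinguishes_agree_below (s r : @osep V) P Q n0 nr :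
  pretangle adj Q -> eff_distinguishes adj s P Q -> has_order s n0 ->
  is_sep adj r -> r <> swap r -> has_order r nr -> nr < n0 -> P r -> Q r.
Proof.
  intros pQ [Hd [n [Hn Hmin]]] Hs Hr Hne Hnr Hlt Pr.
  assert (Qs : Q s \/ Q (swap s))
    by (destruct Hd as [_ [_ [[_ H] | [_ H]]]]; auto).
  assert (Qorients : Q r \/ Q (swap r)).
  { destruct Qs as [Qs | Qs].
    - exact (pretangle_orients_lower _ _ _ _ _ pQ Qs Hs Hr Hnr Hlt).
    - exact (pretangle_orients_lower _ _ _ _ _ pQ Qs (has_order_swap _ _ Hs)
               Hr Hnr Hlt). }
  destruct Qorients as [Qr | Qr]; [exact Qr|].
  exfalso.
  assert (n <= nr) by (apply (Hmin r nr); [unfold distinguishes; auto | exact Hnr]).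
  rewrite (has_order_unique _ _ _ Hs Hn) in Hlt; lia.
Qed.

Lemma consistent_not_le (O : @osep V -> Prop) (x y : osep) :
  consistent O -> O (swap x) -> O y -> ~ same_sep x y -> ~ ole x y.
Proof.
  intros Hcons Ox Oy Hns Hle.
  apply (Hcons _ _ Ox Oy); [|rewrite swap_swap; exact Hle].
  intros [E | E]; apply Hns; [right | left];
    [rewrite E | rewrite E, swap_swap]; reflexivity.
Qed.

(* The crossing lemma.  Then no separation r of
   order below |s| that is nested with s distinguishes A and B (oriented as
   swap r in A, r in B): C and D would have to contain swap r and r, and the
   four pretangles A, B, C, D would realise all four orientation pairs of r
   and s, one of which is inconsistent because r and s are nested. *)
Lemma nested_low_order_cannot_distinguish (A B C D : @osep V -> Prop) s r n0 nr :
  pretangle adj A -> pretangle adj B -> pretangle adj C -> pretangle adj D ->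
  A (swap s) -> B s -> C s -> D (swap s) -> has_order s n0 ->
  eff_distinguishes adj s A C -> eff_distinguishes adj s D B ->
  is_sep adj r -> r <> swap r -> has_order r nr -> nr < n0 ->
  A (swap r) -> B r -> ~ nested_pair r s.
Proof.
  intros pA pB pC pD As Bs Cs Ds Hs effAC effDB Hr Hne Hnr Hlt Ar Br.
  assert (Hr' : is_sep adj (swap r)) by exact (is_sep_swap _ Hr).
  assert (Hne' : swap r <> swap (swap r))
    by (rewrite swap_swap; intro E; apply Hne; symmetry; exact E).
  assert (Cr : C (swap r)) by exact (eff_distinguishes_agree_below _ _ _ _ _ _
    pC effAC Hs Hr' Hne' (has_order_swap _ _ Hnr) Hlt Ar).
  assert (Dr : D r) by exact (eff_distinguishes_agree_below _ _ _ _ _ _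
    pD (eff_distinguishes_sym _ _ _ effDB) Hs Hr Hne Hnr Hlt Br).
  assert (Hord : nr <> n0) by lia.
  pose proof (has_order_swap _ _ Hnr) as Hnr'.
  pose proof (has_order_swap _ _ Hs) as Hs'.
  rewrite <- (swap_swap r) in Br, Dr.
  intros [Hle | [Hle | [Hle | Hle]]].
  - exact (consistent_not_le _ _ _ (proj1 pC) Cr Cs
      (different_order_not_same_sep _ _ _ _ Hnr Hs Hord) Hle).
  - exact (consistent_not_le _ _ _ (proj1 pA) Ar As
      (different_order_not_same_sep _ _ _ _ Hnr Hs' Hord) Hle).
  - exact (consistent_not_le _ _ _ (proj1 pB) Br Bs
      (different_order_not_same_sep _ _ _ _ Hnr' Hs Hord) Hle).
  - exact (consistent_not_le _ _ _ (proj1 pD) Dr Ds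
      (different_order_not_same_sep _ _ _ _ Hnr' Hs' Hord) Hle).
Qed.

(* Then s efficiently distinguishes P1 and P2: a cheaper
   distinguisher could be taken in N, hence nested with s, contradicting the
   crossing lemma. *)
Lemma relevant_pairs_chain (PP : (osep -> Prop) -> Prop) (N : osep -> Prop)
    (s : osep) (P1 P2 Q1 O2 : osep -> Prop) :
  (forall P, PP P -> pretangle adj P) -> nested_set adj N ->
  eff_dist_set adj N PP -> sep_in N s ->
  PP P1 -> PP P2 -> pretangle adj Q1 -> pretangle adj O2 ->
  P1 (swap s) -> P2 s ->
  eff_distinguishes adj s P1 Q1 -> eff_distinguishes adj s O2 P2 ->
  eff_distinguishes adj s P1 P2.
Proof.
  intros Hpre Hnest Heff Ns PP1 PP2 pQ1 pO2 P1s P2s eff1 eff2.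
  pose proof (Hpre _ PP1) as pP1; pose proof (Hpre _ PP2) as pP2.
  assert (Q1s : Q1 s).
  { rewrite <- (swap_swap s).
    exact (distinguishes_other_side _ _ _ pP1
             (distinguishes_swap _ _ _ (proj1 eff1)) P1s). }
  assert (O2s : O2 (swap s))
    by exact (distinguishes_other_side _ _ _ pP2
                (distinguishes_sym _ _ _ (proj1 eff2)) P2s).
  pose proof eff1 as [[Hs [Hne _]] [n0 [Hn0 _]]].
  split; [unfold distinguishes; auto|].
  exists n0; split; [exact Hn0|].
  intros t m Ht Hm.
  destruct (le_lt_dec n0 m) as [Hle | Hlt]; [exact Hle | exfalso].
  destruct (Heff _ _ PP1 PP2 (ex_intro _ t Ht))
    as [r [Nr [[Hr [Hner Hor]] [nr [Hnr Hmin]]]]].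
  pose proof (Hmin t m Ht Hm) as Hnrm.
  pose proof (nested_set_sep_in _ _ _ Hnest Nr Ns) as Hrs.
  destruct Hor as [[P1r P2r] | [P1r P2r]].
  - rewrite <- (swap_swap r) in P1r.
    apply (nested_low_order_cannot_distinguish _ _ _ _ _ (swap r) _ nr
             pP1 pP2 pQ1 pO2 P1s P2s Q1s O2s Hn0 eff1 eff2 (is_sep_swap _ Hr));
      [ rewrite swap_swap; intro E; apply Hner; symmetry; exact E
      | exact (has_order_swap _ _ Hnr) | lia | exact P1r | exact P2r
      | exact (nested_pair_swap_l _ _ Hrs) ].
  - exact (nested_low_order_cannot_distinguish _ _ _ _ _ _ _ nr
             pP1 pP2 pQ1 pO2 P1s P2s Q1s O2s Hn0 eff1 eff2
             Hr Hner Hnr ltac:(lia) P1r P2r Hrs).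
Qed.
End Separations.

(* Pick, for every i, witnesses O_i, P_i, Q_i of the relevance of the pair
   s_i < s_(i+1); the sequence O_0, P_0, P_1, ... has the required
   properties, the efficiency of each later step being [relevant_pairs_chain]
   applied to P_j, P_(j+1), Q_j, O_(j+1). *)
Theorem mainTheorem14 (V : Type) (adj : V -> V -> Prop)
  (PP : (osep -> Prop) -> Prop) (N : osep -> Prop) (s : nat -> osep) :
  (forall P, PP P -> pretangle adj P) ->
  nested_set adj N ->
  eff_dist_set adj N PP ->
  (forall i, sep_in N (s i)) ->
  strictly_increasing s ->
  strongly_relevant_seq adj PP s ->
  exists Pseq : nat -> (@osep V -> Prop),
    forall i, PP (Pseq i) /\
      Pseq i (swap (s i)) /\ Pseq (S i) (s i) /\
      eff_distinguishes adj (s i) (Pseq i) (Pseq (S i)).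
Proof.
  intros Hpre Hnest Heff HsN _ [_ Hrel].
  set (witnesses := fun (i : nat) (w : (osep -> Prop) * (osep -> Prop) * (osep -> Prop)) =>
    let '(Oi, Pi, Qi) := w in
    PP Oi /\ PP Pi /\ PP Qi /\ eff_distinguishes adj (s i) Oi Pi /\ Pi (s i) /\
    eff_distinguishes adj (s (S i)) Pi Qi /\ Pi (swap (s (S i)))).
  destruct (choice witnesses) as [w Hw].
  { intro i; destruct (Hrel i) as [_ [Oi [Pi [Qi H]]]]; exists (Oi, Pi, Qi); exact H. }
  exists (fun i => match i with 0 => fst (fst (w 0)) | S j => snd (fst (w j)) end).
  intros [| j].
  - pose proof (Hw 0) as W0; destruct (w 0) as [[O0 P0] Q0]; simpl.
    destruct W0 as [PO0 [PP0 [_ [eff0 [P0s _]]]]].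
    split; [exact PO0 | split; [| split; [exact P0s | exact eff0]]].
    exact (distinguishes_other_side adj _ _ _ (Hpre _ PP0)
             (distinguishes_sym adj _ _ _ (proj1 eff0)) P0s).
  - pose proof (Hw j) as Wj; pose proof (Hw (S j)) as WSj.
    destruct (w j) as [[Oj Pj] Qj], (w (S j)) as [[OSj PSj] QSj]; simpl.
    destruct Wj as [_ [PPj [PQj [_ [_ [effj Pjs]]]]]].
    destruct WSj as [POSj [PPSj [_ [effSj [PSjs _]]]]].
    split; [exact PPj | split; [exact Pjs | split; [exact PSjs |]]].
    exact (relevant_pairs_chain adj PP N (s (S j)) Pj PSj Qj OSj Hpre Hnest Heff
             (HsN (S j)) PPj PPSj (Hpre _ PQj) (Hpre _ POSj) Pjs PSjs effj effSj).
Qed.
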